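(* Let $(C,T,k)$ be a $(\rho,\alpha,n)$-coding gadget over $\mathbb{R}$ with $C\subseteq\mathbb{R}^N$, and let $Q_1,\dots,Q_m\in\mathbb{R}^{n\times n}$, $b_1,\dots,b_m\in\mathbb{R}$. Let $V\subseteq \mathbb{R}^{N\times N}\times\mathbb{R}$ be the set of pairs $(Y,z)$ satisfying $$Y\in C\otimes C,\quad Y=Y^T,\quad z=\tfrac1k\sum_{i\in[N]}Y[i,i],\quad Q_\ell(TYT^T)=z\,b_\ell\ \ \forall \ell\in[m].$$ Then: (i) if there exists $x\in\{0,1\}^n$ with $Q_\ell(xx^T)=b_\ell$ for all $\ell$, then $V$ contains a nonzero $(Y,z)$ with all entries in $\{0,1\}$ and $\|(Y,z)\|_0 = k^2+1\le \rho^2 d(C)^2+1$; (ii) if there is no $x\in\mathbb{R}^n$ with $Q_\ell(xx^T)=b_\ell$ for all $\ell$, then every nonzero $(Y,z)\in V$ satisfies $\|(Y,z)\|_0\ge \alpha\, d(C)^2$.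
   Context: For $Q,X$ square matrices of equal size, $Q(X):=\sum_{i,j}Q[i,j]X[i,j]$. $\|(Y,z)\|_0$ is the number of nonzero entries of $Y$ plus $1$ if $z\ne0$. For subspaces $U,W$, $U\otimes W$ is the space of matrices whose columns lie in $U$ and rows in $W$. $H^N_k := \{x\in\{0,1\}^N : \|x\|_0 = k\}$; $d(C):=\min_{u\in C\setminus\{0\}}\|u\|_0$; $C$ is $\alpha$-non-overlapping if for all linearly independent $u,v\in C$, $|\mathrm{supp}(u)\cup\mathrm{supp}(v)|\ge\alpha\, d(C)$. A triple $(C,T,k)$ is a $(\rho,\alpha,n)$-coding gadget over $\mathbb{R}$ if $C\subseteq\mathbb{R}^N$ is a subspace, $T\in\mathbb{R}^{n\times N}$, $k\le\rho\, d(C)$, $T(C\cap H^N_k)\supseteq\{0,1\}^n$, and $C$ is $\alpha$-non-overlapping. *)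

From HB Require Import structures.
From mathcomp Require Import all_boot all_order all_algebra.
From mathcomp Require Import boolp reals.
Set Implicit Arguments. Unset Strict Implicit. Unset Printing Implicit Defensive.
Import Order.TTheory GRing.Theory Num.Theory.
Local Open Scope ring_scope.

Section Defs.
Variable R : realType.

Definition qapp n (Q X : 'M[R]_n) : R := \sum_(i < n) \sum_(j < n) Q i j * X i j.

Definition nnz m n (A : 'M[R]_(m, n)) : nat := #|[set ij : 'I_m * 'I_n | A ij.1 ij.2 != 0]|.

Definition supp N (u : 'rV[R]_N) : {set 'I_N} := [set i | u 0 i != 0].

Definition nnz0 N (Y : 'M[R]_N) (z : R) : nat := (nnz Y + (z != 0%R))%N.

Definition is01 m n (A : 'M[R]_(m, n)) : Prop := forall i j, A i j = 0 \/ A i j = 1.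

(* A subspace C of R^N is represented by a matrix whose row space is C;
   u \in C  is  (u <= C)%MS. *)
Definition inC N (C : 'M[R]_N) (u : 'rV[R]_N) : Prop := (u <= C)%MS.

(* d(C) = min nonzero weight of C (0 by convention if C = 0, where it is undefined) *)
Definition wt_pred N (C : 'M[R]_N) : pred nat :=
  fun w => `[< exists u : 'rV[R]_N, inC C u /\ u != 0 /\ #|supp u| = w >].

Definition mindist N (C : 'M[R]_N) : nat :=
  match pselect (exists w, wt_pred C w) with
  | left ex => ex_minn ex
  | right _ => 0%N
  end.

Definition inH N (k : nat) (u : 'rV[R]_N) : Prop := is01 u /\ #|supp u| = k.

Definition non_overlapping N (C : 'M[R]_N) (alpha : R) : Prop :=
  forall u v : 'rV[R]_N, inC C u -> inC C v -> row_free (col_mx u v) ->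
    alpha * (mindist C)%:R <= #|supp u :|: supp v|%:R.

(* (C,T,k) is a (rho,alpha,n)-coding gadget over R; T : R^{n x N} acts on
   column vectors, so T(u) = T *m u^T for u : 'rV_N. *)
Definition coding_gadget (rho alpha : R) (n N : nat)
    (C : 'M[R]_N) (T : 'M[R]_(n, N)) (k : nat) : Prop :=
  [/\ k%:R <= rho * (mindist C)%:R,
      (forall x : 'cV[R]_n, is01 x ->
         exists2 u : 'rV[R]_N, inC C u /\ inH k u & T *m u^T = x)
    & non_overlapping C alpha].

(* Y in C (x) C : rows and columns of Y lie in C *)
Definition in_tensor N (C : 'M[R]_N) (Y : 'M[R]_N) : Prop :=
  (Y <= C)%MS /\ (Y^T <= C)%MS.

Definition inV (n N m k : nat) (C : 'M[R]_N) (T : 'M[R]_(n, N))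
    (Q : 'I_m -> 'M[R]_n) (b : 'I_m -> R) (Y : 'M[R]_N) (z : R) : Prop :=
  [/\ in_tensor C Y, Y = Y^T, z = k%:R^-1 * \tr Y
    & forall l, qapp (Q l) (T *m Y *m T^T) = z * b l].

End Defs.

From HB Require Import structures.
From mathcomp Require Import all_boot all_order all_algebra.
From mathcomp Require Import boolp reals.
From mathcomp Require Import ring lra.
Import Order.TTheory GRing.Theory Num.Theory.
Local Open Scope ring_scope.

(* Part (i): lift a 0/1 solution x to a codeword u with T u = x and take Y = u u^T.
   Part (ii): pick a nonzero row r of Y. If some other row is independent of r,
   non-overlap gives alpha d(C) rows of Y in the union of their supports, each a
   nonzero codeword (by symmetry) of weight >= d(C). Otherwise Y is a nonzero
   multiple of r r^T, and a rescaling of T r^T solves the quadratic system. *)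

Section SparseSDP.
Set Implicit Arguments.
Unset Strict Implicit.

Lemma not_row_free_col_mx_rV (F : fieldType) (N : nat) (r s : 'rV[F]_N) :
  r != 0 -> ~~ row_free (col_mx r s) -> exists c, s = c *: r.
Proof.
move=> r0; have [/submxP [D ->] _|nsr] := boolP (s <= r)%MS.
  by exists (D 0 0); rewrite {1}(mx11_scalar D) mul_scalar_mx.
have: (r < r + s)%MS by rewrite ltmxE addsmxSl addsmx_sub submx_refl nsr.
move/rank_ltmx; rewrite addsmxE rank_rV r0 => rs2.
by rewrite /row_free eqn_leq rank_leq_row rs2.
Qed.

Variable R : realType.

Lemma mindist_le_supp N (C : 'M[R]_N) (u : 'rV[R]_N) :
  inC C u -> u != 0 -> (mindist C <= #|supp u|)%N.
Proof.
move=> Cu u0; rewrite /mindist; case: pselect => [ex|//].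
by case: ex_minnP => w _; apply; apply/asboolP; exists u.
Qed.

Lemma qappZ n (Q X : 'M[R]_n) (a : R) : qapp Q (a *: X) = a * qapp Q X.
Proof.
rewrite /qapp mulr_sumr; apply: eq_bigr => i _; rewrite mulr_sumr.
by apply: eq_bigr => j _; rewrite mxE mulrCA.
Qed.

Lemma outer_rVE N (u : 'rV[R]_N) i j : (u^T *m u) i j = u 0 i * u 0 j.
Proof. by rewrite mxE big_ord1 !mxE. Qed.

Lemma mxtrace_outer_rV N (u : 'rV[R]_N) : \tr (u^T *m u) = \sum_j u 0 j ^+ 2.
Proof. by apply: eq_bigr => j _; rewrite outer_rVE expr2. Qed.

Lemma mxtrace_outer_rV_gt0 N (u : 'rV[R]_N) : u != 0 -> 0 < \tr (u^T *m u).
Proof.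
move=> u0; have [j uj0] : exists j, u 0 j != 0.
  apply/existsP; apply: contraNT u0 => /existsPn u0.
  by apply/eqP/rowP => j; rewrite mxE; apply/eqP/negbNE.
rewrite mxtrace_outer_rV (bigD1 j) //= ltr_pwDl ?exprn_even_gt0 ?uj0 ?orbT //.
by apply: sumr_ge0 => i _; apply: sqr_ge0.
Qed.

Lemma nnz_outer_rV N (u : 'rV[R]_N) : nnz (u^T *m u) = (#|supp u| ^ 2)%N.
Proof.
rewrite /nnz (_ : [set _ | _] = setX (supp u) (supp u)) ?cardsX ?mulnn //.
by apply/setP => -[i j]; rewrite !inE outer_rVE mulf_eq0 negb_or.
Qed.

Lemma is01_outer_rV N (u : 'rV[R]_N) : is01 u -> is01 (u^T *m u).
Proof.
move=> u01 i j; rewrite outer_rVE.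
by case: (u01 0 i) => ->; case: (u01 0 j) => ->; rewrite ?mulr0 ?mul0r ?mulr1; auto.
Qed.

Lemma mxtrace_outer_rV01 N (u : 'rV[R]_N) :
  is01 u -> \tr (u^T *m u) = #|supp u|%:R.
Proof.
move=> u01; rewrite mxtrace_outer_rV -sum1_card natr_sum [RHS]big_mkcond /=.
apply: eq_bigr => i _; rewrite inE.
by case: (u01 0 i) => ->; rewrite ?expr0n ?expr1n ?eqxx ?oner_neq0.
Qed.

Lemma in_tensor_outer_rV N (C : 'M[R]_N) (u : 'rV[R]_N) :
  inC C u -> in_tensor C (u^T *m u).
Proof.
move=> Cu; split; last rewrite trmx_mul trmxK; exact: submx_trans (submxMl _ _) Cu.
Qed.

Lemma inV_outer_rV n N m k (C : 'M[R]_N) (T : 'M[R]_(n, N))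
    (Q : 'I_m -> 'M[R]_n) (b : 'I_m -> R) (u : 'rV[R]_N) :
  (0 < k)%N -> inC C u -> inH k u ->
  (forall l, qapp (Q l) ((T *m u^T) *m (T *m u^T)^T) = b l) ->
  inV k C T Q b (u^T *m u) 1.
Proof.
move=> k0 Cu [u01 uk] Tu; split.
- exact: in_tensor_outer_rV.
- by rewrite trmx_mul trmxK.
- by rewrite mxtrace_outer_rV01 // uk mulVf // pnatr_eq0 -lt0n.
- by move=> l; rewrite mul1r -Tu trmx_mul trmxK !mulmxA.
Qed.

Lemma sum_row_weights_le_nnz N (Y : 'M[R]_N) (U : {set 'I_N}) :
  (\sum_(a in U) #|supp (row a Y)| <= nnz Y)%N.
Proof.
have -> : (\sum_(a in U) #|supp (row a Y)| =
           \sum_(a in U) \sum_(c | Y a c != 0%R) 1)%N.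
  apply: eq_bigr => a _; rewrite -sum1_card; apply: eq_bigl => c.
  by rewrite inE mxE.
set P := [set p : 'I_N * 'I_N | (p.1 \in U) && (Y p.1 p.2 != 0%R)].
rewrite pair_big_dep /nnz (eq_bigl (fun p => p \in P)); last by move=> p; rewrite inE.
rewrite sum1_card; apply: subset_leq_card.
by apply/subsetP => -[a c]; rewrite !inE /= => /andP[_ ->].
Qed.

Lemma nnz_ge_supp_union N (C : 'M[R]_N) (Y : 'M[R]_N) i l :
  in_tensor C Y -> Y = Y^T ->
  (#|supp (row i Y) :|: supp (row l Y)| * mindist C <= nnz Y)%N.
Proof.
move=> [CY _] Ysym; rewrite -sum_nat_const.
apply: (leq_trans _ (sum_row_weights_le_nnz Y _)); apply: leq_sum => a aU.
apply: mindist_le_supp; first exact: submx_trans (row_sub _ _) CY.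
apply: contraTneq aU => /rowP Ya0; rewrite !inE negb_or !mxE Ysym !mxE.
by have := Ya0 i; have := Ya0 l; rewrite !mxE => -> ->; rewrite eqxx.
Qed.

Lemma sym_rank_one N (Y : 'M[R]_N) i :
  Y = Y^T -> row i Y != 0 -> (forall l, exists c, row l Y = c *: row i Y) ->
  exists2 c : R, c != 0 & (row i Y)^T *m row i Y = c *: Y.
Proof.
move=> Ysym ri0 dep.
have sym a c : Y a c = Y c a by rewrite {1}Ysym mxE.
have {}dep l : exists c, forall j, Y l j = c * Y i j.
  by have [c /rowP cE] := dep l; exists c => j; have := cE j; rewrite !mxE.
have Yii : Y i i != 0.
  apply/eqP => Yii0; move/eqP: ri0; apply; apply/rowP => j.
  by rewrite !mxE sym; have [c ->] := dep j; rewrite Yii0 mulr0.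
exists (Y i i) => //; apply/matrixP => a c; rewrite outer_rVE !mxE.
by have [ca Ha] := dep a; rewrite [Y i a]sym !Ha; ring.
Qed.

Lemma solvable_of_rank_one n N m k (C : 'M[R]_N) (T : 'M[R]_(n, N))
    (Q : 'I_m -> 'M[R]_n) (b : 'I_m -> R) (Y : 'M[R]_N) (z c : R) (r : 'rV[R]_N) :
  (0 < k)%N -> inV k C T Q b Y z -> r != 0 -> c != 0 -> r^T *m r = c *: Y ->
  exists x : 'cV[R]_n, forall l, qapp (Q l) (x *m x^T) = b l.
Proof.
move=> k0 [_ _ Hz HQ] r0 c0 rY.
set s := \tr (r^T *m r); have s0 : 0 < s := mxtrace_outer_rV_gt0 r0.
have trY : \tr Y = s / c by rewrite /s rY mxtraceZ [c * _]mulrC mulfK.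
have kR : (k%:R : R) != 0 by rewrite pnatr_eq0 -lt0n.
exists (Num.sqrt (k%:R / s) *: (T *m r^T)) => l.
rewrite linearZ /= -scalemxAl -scalemxAr scalerA -expr2 sqr_sqrtr ?divr_ge0 ?ler0n ?ltW //.
rewrite trmx_mul trmxK mulmxA -(mulmxA T) rY -scalemxAr -scalemxAl !qappZ HQ Hz trY.
by field; rewrite kR c0 (gt_eqF s0).
Qed.

Lemma nnz0_ge_of_unsolvable (alpha : R) n N m k (C : 'M[R]_N) (T : 'M[R]_(n, N))
    (Q : 'I_m -> 'M[R]_n) (b : 'I_m -> R) (Y : 'M[R]_N) (z : R) :
  (0 < k)%N -> non_overlapping C alpha ->
  ~ (exists x : 'cV[R]_n, forall l, qapp (Q l) (x *m x^T) = b l) ->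
  inV k C T Q b Y z -> (Y != 0) || (z != 0) ->
  alpha * (mindist C)%:R ^+ 2 <= (nnz0 Y z)%:R.
Proof.
move=> k0 hno nox VYz nz; have [CYY Ysym Hz _] := VYz; have [CY _] := CYY.
have CR l : inC C (row l Y) by exact: submx_trans (row_sub _ _) CY.
have [i ri0] : exists i, row i Y != 0.
  have Y0 : Y != 0.
    by apply: contraTneq _ nz => Y0; rewrite Hz Y0 mxtrace0 mulr0 !eqxx.
  apply/existsP; apply: contraNT Y0 => /existsPn Y0.
  by apply/eqP/row_matrixP => a; rewrite row0; apply/eqP/negbNE/Y0.
have [/existsP [l fl]|/existsPn dep] :=
  boolP [exists l, row_free (col_mx (row i Y) (row l Y))].
  set U := supp (row i Y) :|: supp (row l Y).
  apply: le_trans (_ : #|U|%:R * (mindist C)%:R <= _).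
    by rewrite expr2 mulrA ler_wpM2r // hno.
  by rewrite -natrM ler_nat (leq_trans (nnz_ge_supp_union _ _ CYY Ysym)) ?leq_addr.
have [c c0 rY] := sym_rank_one Ysym ri0 (fun l => not_row_free_col_mx_rV ri0 (dep l)).
by case: nox; exact: solvable_of_rank_one VYz ri0 c0 rY.
Qed.

End SparseSDP.

Theorem mainTheorem10 (R : realType) (rho alpha : R) (n N m k : nat)
    (C : 'M[R]_N) (T : 'M[R]_(n, N)) (Q : 'I_m -> 'M[R]_n) (b : 'I_m -> R) :
  (0 < k)%N ->
  coding_gadget rho alpha C T k ->
  ((exists x : 'cV[R]_n, is01 x /\ forall l, qapp (Q l) (x *m x^T) = b l) ->
     exists Y : 'M[R]_N, exists z : R,
       [/\ inV k C T Q b Y z, (Y != 0) || (z != 0), is01 Y & z = 0 \/ z = 1] /\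
       nnz0 Y z = (k ^ 2 + 1)%N /\
       (k ^ 2 + 1)%:R <= rho ^+ 2 * (mindist C)%:R ^+ 2 + 1) /\
  (~ (exists x : 'cV[R]_n, forall l, qapp (Q l) (x *m x^T) = b l) ->
     forall (Y : 'M[R]_N) (z : R), inV k C T Q b Y z -> (Y != 0) || (z != 0) ->
       alpha * (mindist C)%:R ^+ 2 <= (nnz0 Y z)%:R).
Proof.
move=> k0 [hk hT hno]; split; last by move=> nox Y z; apply: nnz0_ge_of_unsolvable.
case=> x [x01 hx]; have [u [Cu [u01 uk]] Tux] := hT x x01.
exists (u^T *m u), 1; split; [split | split].
- by apply: inV_outer_rV => // l; rewrite Tux.
- by rewrite oner_neq0 orbT.
- exact: is01_outer_rV.
- by right.
- by rewrite /nnz0 nnz_outer_rV uk oner_neq0.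
- have k_ge0 : (0 : R) <= k%:R by [].
  rewrite natrD natrX lerD2r -exprMn; nra.
Qed.
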